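(* For a random threshold graph $G$ on $n\ge1$ vertices and an integer $k$ with $0\le k\le n/2$, the matching number $\nu(G)$ satisfies $$P(\nu(G)=k)=\begin{cases}\left(\tfrac12\right)^{n-1}\binom{n}{k} & k<\tfrac n2,\\[4pt] \left(\tfrac12\right)^{n-1}\binom{n-1}{\lfloor\frac{n-1}{2}\rfloor} & k=\tfrac n2.\end{cases}$$
   Context: A threshold graph on $n\ge1$ vertices is built from a base vertex $v_0$ by successively adding $v_1,\dots,v_{n-1}$, each either isolated (adjacent to no earlier vertex) or dominating (adjacent to all earlier vertices); its creation sequence $\mathrm{seq}(G)=s_1\cdots s_{n-1}$ has $s_i=1$ if $v_i$ is dominating and $s_i=0$ otherwise, and each unlabeled threshold graph on $n$ vertices corresponds to exactly one binary string of length $n-1$. A random threshold graph on $n$ vertices is one whose creation sequence is uniformly distributed over all $2^{n-1}$ binary strings of length $n-1$. $\nu(G)$ denotes the maximum number of edges in a matching of $G$. *)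

From mathcomp Require Import all_boot all_order all_algebra.
Set Implicit Arguments. Unset Strict Implicit. Unset Printing Implicit Defensive.

(* Threshold graph on vertices 'I_n = {v_0,...,v_(n-1)} from creation sequence
   s = s_1 ... s_(n-1), stored as a seq bool with s_i = nth false s (i-1).
   v_j (j >= 1) is dominating iff s_j = 1, i.e. adjacent to all v_i with i < j. *)
Definition thr_adj (n : nat) (s : seq bool) (i j : 'I_n) : bool :=
  ((i < j) && nth false s j.-1) || ((j < i) && nth false s i.-1).

Definition is_matching (n : nat) (adj : 'I_n -> 'I_n -> bool)
  (M : {set {set 'I_n}}) : bool :=
  [forall e in M, exists i, exists j, adj i j && (e == [set i; j])]
  && trivIset M.

Definition matching_number (n : nat) (adj : 'I_n -> 'I_n -> bool) : nat :=
  \max_(M : {set {set 'I_n}} | is_matching adj M) #|M|.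

Definition thr_nu (n : nat) (t : (n.-1).-tuple bool) : nat :=
  matching_number (thr_adj (n := n) t).

Definition prob_nu_eq (n k : nat) : rat :=
  (#|[set t : (n.-1).-tuple bool | thr_nu t == k]|%:R / (2 ^ n.-1)%:R)%R.

From mathcomp Require Import all_boot all_order all_algebra.
From mathcomp Require Import zify.

(* Scan the vertices in creation order and let nu_m be the matching number of
   the subgraph induced by the first m of them.  Since v_m is adjacent to all
   earlier vertices or to none, nu_(m+1) = nu_m + 1 exactly when v_m is
   dominating and some earlier vertex is left unmatched (2 nu_m < m), and
   otherwise nu_(m+1) = nu_m.  So nu(G) is the outcome of a greedy walk on the
   creation sequence, and counting sequences by that outcome gives the
   recursion c(L+1, k) = c(L, k) + [L+1 <= 2k] c(L, k) + [2(k-1) < L+1] c(L, k-1),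
   which Pascal's rule solves in closed form. *)

Set Implicit Arguments.
Unset Strict Implicit.
Unset Printing Implicit Defensive.

Section MatchingsBelow.

Variables (n : nat) (adj : rel 'I_n).
Hypotheses (adj_irr : irreflexive adj) (adj_sym : symmetric adj).
Implicit Types (M : {set {set 'I_n}}) (e : {set 'I_n}) (m : nat).

Lemma matching_edgeP M e : is_matching adj M -> e \in M ->
  exists i j, adj i j /\ e = [set i; j].
Proof.
case/andP => /forall_inP edges _ /edges /existsP[i /existsP[j /andP[ij /eqP->]]].
by exists i, j.
Qed.

Lemma matchingS M M' : M' \subset M -> is_matching adj M -> is_matching adj M'.
Proof.
move=> sM'M /andP[/forall_inP edges triv]; apply/andP; split.
  by apply/forall_inP => e /(subsetP sM'M)/edges.
exact: trivIsetS triv.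
Qed.

Lemma card_cover_matching M : is_matching adj M -> #|cover M| = 2 * #|M|.
Proof.
move=> mM; have /andP[_ /eqP <-] := mM.
rewrite (eq_bigr (fun _ => 2)) => [|e eM]; first by rewrite sum_nat_const mulnC.
have [i [j [ij ->]]] := matching_edgeP mM eM.
by rewrite cards2; case: eqP ij => // ->; rewrite adj_irr.
Qed.

Lemma card_matching_at v M : is_matching adj M -> #|[set e in M | v \in e]| <= 1.
Proof.
case/andP => _ /trivIsetP triv; apply/card_le1_eqP => e1 e2.
rewrite !inE => /andP[e1M ve1] /andP[e2M ve2]; have [//|e12] := eqVneq e1 e2.
by have /disjointFr/(_ ve1) := triv _ _ e1M e2M e12; rewrite ve2.
Qed.

Definition below (m : nat) : {set 'I_n} := [set i : 'I_n | i < m].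

Lemma card_below m : m <= n -> #|below m| = m.
Proof.
move=> le_mn; have widen_inj : injective (widen_ord le_mn).
  by move=> i j /(congr1 val) /= /val_inj.
rewrite -[RHS]card_ord -(card_imset _ widen_inj); apply: eq_card => i.
rewrite inE; apply/idP/imsetP => [lt_im|[j _ ->]]; last by rewrite /= ltn_ord.
by exists (Ordinal lt_im) => //; apply: val_inj.
Qed.

Definition matching_below m M := is_matching adj M && (cover M \subset below m).

Definition nu_below m := \max_(M | matching_below m M) #|M|.

Lemma matching_below0 m : matching_below m set0.
Proof.
rewrite /matching_below /is_matching /trivIset /cover !big_set0 sub0set cards0.
by rewrite eqxx !andbT; apply/forall_inP => e; rewrite inE.
Qed.

Lemma nu_below_witness m : exists2 M, matching_below m M & nu_below m = #|M|.
Proof.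
exists [arg max_(M > set0 | matching_below m M) #|M|].
  by case: arg_maxnP => //; apply: matching_below0.
by apply: bigmax_eq_arg; apply: matching_below0.
Qed.

Lemma nu_below_le_half m : m <= n -> 2 * nu_below m <= m.
Proof.
move=> le_mn; have [M /andP[mM sub] ->] := nu_below_witness m.
by rewrite -(card_cover_matching mM) -[leqRHS](card_below le_mn) subset_leq_card.
Qed.

Lemma nu_below_mono m : nu_below m <= nu_below m.+1.
Proof.
apply/bigmax_leqP => M /andP[mM sub]; apply: leq_bigmax_cond.
rewrite /matching_below mM (subset_trans sub) //.
by apply/subsetP => i; rewrite !inE => /ltnW.
Qed.

Lemma nu_below_full : nu_below n = matching_number adj.
Proof.
apply: eq_bigl => M; rewrite /matching_below.
by rewrite (_ : cover M \subset _) ?andbT //; apply/subsetP => i _; rewrite inE.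
Qed.

Lemma matching_below_drop (v : 'I_n) M :
  matching_below v.+1 M -> matching_below v [set e in M | v \notin e].
Proof.
case/andP => mM sub; rewrite /matching_below (matchingS _ mM) ?setIdE ?subsetIl //=.
apply/subsetP => i /bigcupP[e]; rewrite !inE => /andP[eM ve] ie.
have /(subsetP sub) : i \in cover M by apply/bigcupP; exists e.
rewrite !inE ltnS leq_eqVlt => /orP[/eqP/val_inj iv|//].
by rewrite -iv ie in ve.
Qed.

Lemma nu_below_succ_split (v : 'I_n) M : matching_below v.+1 M ->
  #|M| <= nu_below v + #|[set e in M | v \in e]|.
Proof.
move=> M_below; rewrite -(cardsID [set e : {set 'I_n} | v \notin e] M) leq_add //.
  by apply: leq_bigmax_cond; rewrite -setIdE; apply: matching_below_drop.
by apply: subset_leq_card; apply/subsetP => e; rewrite !inE negbK andbC.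
Qed.

Lemma matching_below_neighbour (v : 'I_n) M e : matching_below v.+1 M ->
  e \in M -> v \in e -> exists2 i : 'I_n, i < v & adj i v.
Proof.
case/andP => mM sub eM ve; have [i [j [ij ee]]] := matching_edgeP mM eM.
wlog jv : i j ij ee / j = v.
  move=> wlog_v; move: ve; rewrite ee => /set2P[vi|/esym]; last exact: wlog_v ij ee.
  by apply: (wlog_v j i); rewrite 1?adj_sym 1?setUC.
subst j.
have /(subsetP sub) : i \in cover M by apply/bigcupP; exists e => //; rewrite ee set21.
rewrite inE ltnS leq_eqVlt => /orP[/eqP/val_inj iv|iv]; last by exists i.
by rewrite iv adj_irr in ij.
Qed.

Lemma nu_below_succ_le (v : 'I_n) : nu_below v.+1 <= (nu_below v).+1.
Proof.
apply/bigmax_leqP => M M_below.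
rewrite -addn1 (leq_trans (nu_below_succ_split M_below)) //.
by rewrite leq_add2l card_matching_at //; case/andP: M_below.
Qed.

Lemma nu_below_succ_isolated (v : 'I_n) :
  (forall i : 'I_n, i < v -> ~~ adj i v) -> nu_below v.+1 <= nu_below v.
Proof.
move=> isolated; apply/bigmax_leqP => M M_below.
suff no_edge_at_v : [set e in M | v \in e] = set0.
  by rewrite -[leqRHS]addn0 -(cards0 {set 'I_n}) -no_edge_at_v nu_below_succ_split.
apply/setP => e; rewrite !inE; apply/negP => /andP[eM ve].
by have [i /isolated/negP] := matching_below_neighbour M_below eM ve.
Qed.

Lemma matching_add_edge M u v : is_matching adj M -> adj u v ->
  u \notin cover M -> v \notin cover M ->
  is_matching adj ([set u; v] |: M) /\ [set u; v] \notin M.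
Proof.
move=> /andP[/forall_inP edges triv] uv uM vM.
have disj : {in M, forall B : {set 'I_n}, [disjoint [set u; v] & B]}.
  move=> B BM; rewrite -setI_eq0; apply/eqP/setP => x; rewrite !inE.
  apply/negP => /andP[/orP[]/eqP-> xB]; [move/negP: uM | move/negP: vM];
    by apply; apply/bigcupP; exists B.
have M_no0 : set0 \notin M.
  apply/negP => /edges/existsP[i /existsP[j /andP[_ /eqP/setP/(_ i)]]].
  by rewrite !inE eqxx.
have [triv' notinM] := trivIsetU1 disj triv M_no0; split=> //.
apply/andP; split=> //; apply/forall_inP => e /setU1P[->|/edges//].
by apply/existsP; exists u; apply/existsP; exists v; rewrite uv eqxx.
Qed.

Lemma nu_below_succ_dominating (v : 'I_n) :
  (forall i : 'I_n, i < v -> adj i v) -> 2 * nu_below v < v ->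
  (nu_below v).+1 <= nu_below v.+1.
Proof.
move=> dominating; have [M /andP[mM sub] ->] := nu_below_witness v.
rewrite -(card_cover_matching mM) => lt_cover_v.
have [u uv uM] : exists2 u : 'I_n, u < v & u \notin cover M.
  have /subsetPn[u] : ~~ (below v \subset cover M).
    apply: contraTN lt_cover_v => /subset_leq_card.
    by rewrite card_below -?leqNgt // ltnW.
  by rewrite inE; exists u.
have vM : v \notin cover M by apply/negP => /(subsetP sub); rewrite inE ltnn.
have [mM' notinM] := matching_add_edge mM (dominating u uv) uM vM.
have M_below' : matching_below v.+1 ([set u; v] |: M).
  rewrite /matching_below mM'; apply/subsetP => x /bigcupP[e /setU1P[->|eM] xe].
    by move: xe; rewrite !inE => /orP[]/eqP-> //; rewrite ltnW.
  have /(subsetP sub) : x \in cover M by apply/bigcupP; exists e.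
  by rewrite !inE => /ltnW.
by apply: leq_trans (leq_bigmax_cond _ M_below'); rewrite cardsU1 notinM.
Qed.

End MatchingsBelow.

Definition greedy_step (state : nat * nat) (b : bool) : nat * nat :=
  let: (free, matched) := state in
  if b && (0 < free) then (free.-1, matched.+1) else (free.+1, matched).

Definition greedy_nu (s : seq bool) : nat := (foldl greedy_step (0, 0) s).2.

Lemma greedy_vertex_count (s : seq bool) :
  let: (free, matched) := foldl greedy_step (0, 0) s in free + 2 * matched = size s.
Proof.
elim/last_ind: s => [|s b] //=; rewrite foldl_rcons size_rcons.
by case: foldl => [[|f] d] /=; case: b => /=; lia.
Qed.

Lemma greedy_nu_rcons s b :
  greedy_nu (rcons s b) = greedy_nu s + (b && (2 * greedy_nu s < size s)).
Proof.
rewrite /greedy_nu foldl_rcons; have := greedy_vertex_count s.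
by case: foldl => [[|f] d] /=; case: b => /=; lia.
Qed.

Lemma thr_adj_irr n (s : seq bool) : irreflexive (@thr_adj n s).
Proof. by move=> i; rewrite /thr_adj ltnn. Qed.

Lemma thr_adj_sym n (s : seq bool) : symmetric (@thr_adj n s).
Proof. by move=> i j; rewrite /thr_adj orbC. Qed.

Lemma thr_adj_lt n (s : seq bool) (i j : 'I_n) :
  i < j -> thr_adj s i j = nth false (false :: s) j.
Proof.
move=> lt_ij; rewrite /thr_adj lt_ij ltnNge ltnW //= orbF.
by case: j lt_ij => -[].
Qed.

(* The base vertex v_0 is read as an isolated vertex, so [false :: s] lists
   the creation bits of v_0, v_1, ..., v_(n-1). *)
Lemma thr_nu_below n (s : seq bool) m : size s = n.-1 -> m <= n ->
  nu_below (@thr_adj n s) m = greedy_nu (take m (false :: s)).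
Proof.
move=> size_s; have irr := @thr_adj_irr n s.
elim: m => [|m IHm] le_mn.
  by have := nu_below_le_half irr (leq0n n); rewrite take0 /greedy_nu /=; lia.
have size_take : size (take m (false :: s)) = m by rewrite size_takel //= size_s; lia.
rewrite (take_nth false); last by rewrite [size _]/= size_s; lia.
rewrite greedy_nu_rcons size_take -IHm; last exact: ltnW.
have mono := nu_below_mono (@thr_adj n s) m.
case: (nth false (false :: s) m) (fun i : 'I_n => @thr_adj_lt n s i (Ordinal le_mn))
  => adj_v /=.
  have /= le_succ := nu_below_succ_le (@thr_adj n s) (Ordinal le_mn).
  case: ltnP => [lt_half | ge_half].
    by have /= := nu_below_succ_dominating irr adj_v lt_half; lia.
  by have := nu_below_le_half irr le_mn; lia.
have isolated (i : 'I_n) : i < Ordinal le_mn -> ~~ thr_adj s i (Ordinal le_mn).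
  by move=> /adj_v ->.
by have /= := nu_below_succ_isolated irr (@thr_adj_sym n s) isolated; lia.
Qed.

Lemma thr_nu_greedy n (t : (n.-1).-tuple bool) : 0 < n -> thr_nu t = greedy_nu (false :: t).
Proof.
move=> n_gt0; rewrite /thr_nu -nu_below_full thr_nu_below ?size_tuple //.
by rewrite take_oversize //= size_tuple prednK.
Qed.

Fixpoint bitseqs (L : nat) : seq (seq bool) :=
  if L is L'.+1 then
    [seq rcons s false | s <- bitseqs L'] ++ [seq rcons s true | s <- bitseqs L']
  else [:: [::]].

Lemma mem_bitseqs L s : (s \in bitseqs L) = (size s == L).
Proof.
elim: L s => [|L IHL] s; first by rewrite inE; case: s.
case/lastP: s => [|s b]; rewrite /= mem_cat.
  by apply/negbTE; rewrite negb_or; apply/andP; split; apply/mapP => -[? _ /esym/eqP];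
    rewrite -size_eq0 size_rcons.
rewrite size_rcons eqSS -IHL.
have not_mem b' : b' != b -> rcons s b \notin [seq rcons s' b' | s' <- bitseqs L].
  by move=> neq; apply/mapP => -[? _ /rcons_inj[_ /eqP]]; rewrite eq_sym (negPf neq).
case: b not_mem => not_mem; rewrite (mem_map (rcons_injl _)).
  by rewrite (negPf (not_mem false _)).
by rewrite (negPf (not_mem true _)) ?orbF.
Qed.

Lemma uniq_bitseqs L : uniq (bitseqs L).
Proof.
elim: L => [|L IHL] //=; rewrite cat_uniq !(map_inj_uniq (rcons_injl _)) IHL /= andbT.
by apply/hasPn => _ /mapP[s _ ->]; apply/mapP => -[? _ /rcons_inj[]].
Qed.

Lemma card_tuples_count L (P : pred (seq bool)) :
  #|[set t : L.-tuple bool | P t]| = count P (bitseqs L).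
Proof.
have perm_tuples : perm_eq [seq val t | t : L.-tuple bool] (bitseqs L).
  apply: uniq_perm; rewrite ?uniq_bitseqs ?(map_inj_uniq val_inj) ?enum_uniq // => s.
  rewrite mem_bitseqs; apply/mapP/eqP => [[t _ ->]|size_s]; first exact: size_tuple.
  by exists (Tuple (introT eqP size_s)); rewrite ?mem_enum.
rewrite cardE size_filter -enumT (eq_count (a2 := P \o val)); last first.
  by move=> t; rewrite /= inE.
by rewrite -count_map (permP perm_tuples).
Qed.

Definition greedy_profile L : seq nat := [seq greedy_nu (false :: s) | s <- bitseqs L].

Lemma greedy_profile_succ L : greedy_profile L.+1 =
  greedy_profile L ++ [seq d + (2 * d < L.+1) | d <- greedy_profile L].
Proof.
rewrite /greedy_profile /= map_cat -!map_comp; congr (_ ++ _); apply/eq_in_map => s.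
  by move=> _; rewrite /comp -rcons_cons greedy_nu_rcons addn0.
rewrite mem_bitseqs => /eqP size_s.
by rewrite /comp -rcons_cons greedy_nu_rcons [size _]/= size_s.
Qed.

Lemma count_mem_bump (ds : seq nat) N k :
  count_mem k [seq d + (2 * d < N) | d <- ds] =
  (if N <= 2 * k then count_mem k ds else 0) +
  (if (0 < k) && (2 * k.-1 < N) then count_mem k.-1 ds else 0).
Proof.
elim: ds => [|d ds IH] /=; first by rewrite !if_same.
by rewrite {}IH; case: k => [|k] /=; do ![case: ifP => ?]; lia.
Qed.

Lemma count_mem_greedy_profile L k :
  count_mem k (greedy_profile L) =
  if k.*2 < L.+1 then 'C(L.+1, k) else if k.*2 == L.+1 then 'C(L, k.-1) else 0.
Proof.
elim: L k => [|L IHL] [|k] //=; rewrite greedy_profile_succ count_cat count_mem_bump !IHL /=.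
  by rewrite !bin0.
rewrite [in RHS]binS.
have [-> | neq_L] := eqVneq L k.*2.+1; last by do ![case: ifP => ?]; lia.
have bin_mid_sym : 'C(k.*2.+1, k.+1) = 'C(k.*2.+1, k).
  by rewrite -[RHS]bin_sub; [congr 'C(_, _) | ]; lia.
by rewrite (binS k.*2.+1 k) bin_mid_sym; do ![case: ifP => ?]; lia.
Qed.

Import GRing.Theory.
Local Open Scope ring_scope.

Theorem mainTheorem7 (n k : nat) (hn : (1 <= n)%N) (hk : (k.*2 <= n)%N) :
  prob_nu_eq n k =
  (if (k.*2 < n)%N then (1 / 2) ^+ n.-1 * ('C(n, k))%:R
   else (1 / 2) ^+ n.-1 * ('C(n.-1, n.-1./2))%:R).
Proof.
have card_nu_eq_k : #|[set t : (n.-1).-tuple bool | thr_nu t == k]| =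
                    count_mem k (greedy_profile n.-1).
  rewrite /greedy_profile count_map -card_tuples_count.
  by apply: eq_card => t; rewrite !inE thr_nu_greedy.
rewrite /prob_nu_eq card_nu_eq_k count_mem_greedy_profile prednK //.
rewrite natrX div1r exprVn mulrC; case: ifP => // ge_n.
have -> : k.*2 == n by rewrite eqn_leq hk leqNgt ge_n.
by have -> : n.-1./2 = k.-1 by lia.
Qed.
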